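(* Let $X$ be a locally finite poset with unique minimal element $0$ and let $f,g:X\to L$ satisfy $g(x)=\langle\bigoplus_{y\le x}f(y)\rangle^+_-$ for all $x\in X$. Then for every $x\in X$, either $|g(x)|\ge|g(y)|$ for all $y\prec x$, or $g(x)=\mathbb{O}$.
   Context: Let $(L^+,\le)$ be a totally ordered set with bottom $\mathbb{O}$ and top $\mathbb{1}$. Let $L^-=\{-a:a\in L^+\}$ be a disjoint copy with reversed order, $L=L^+\cup L^-$ with $-\mathbb{O}=\mathbb{O}$, totally ordered with $L^-$ below $L^+$; $-(-a)=a$; $|a|=a$ on $L^+$, $|a|=-a$ on $L^-$. Symmetric maximum: $a\oplus b=\mathbb{O}$ if $b=-a$, otherwise the one of $a,b$ with larger absolute value. For a finite family $(a_i)_{i\in I}$, the splitting rule gives $\langle\bigoplus_{i\in I}a_i\rangle^+_-:=\big(\bigvee_{a_i\ge\mathbb{O}}a_i\big)\oplus\big(\bigwedge_{a_i<\mathbb{O}}a_i\big)$ (empty sup/inf equal to $\mathbb{O}$); this equals $\bigoplus_{i}a_i$ (independent of parenthesization) when $|I|\le2$ or $\bigvee_ia_i\ne-\bigwedge_ia_i$, and $\mathbb{O}$ otherwise. Locally finite: every interval $[u,v]$ is finite. $y\prec x$ means $x$ covers $y$. *)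

From mathcomp Require Import all_boot all_order.
Set Implicit Arguments. Unset Strict Implicit. Unset Printing Implicit Defensive.
Import Order.TTheory.
Local Open Scope order_scope.

(* L^+ is a totally ordered set with bottom O (= \bot) and top 1 (= \top):
   T : tbOrderType d.  The symmetric extension L = L^+ u L^- is represented
   by pairs (sign, magnitude) with sign = true meaning "negative", subject to
   the invariant that a negative element has nonzero magnitude
   (so that -O = O is identified with O). *)
Section SymExt.
Context {d : Order.disp_t} (T : tbOrderType d).

Record symL := SymL { sgn : bool; mag : T; _ : sgn ==> (mag != \bot) }.

Lemma mkL_proof (s : bool) (a : T) : (s && (a != \bot)) ==> (a != \bot).
Proof. by case: s; case: (a != \bot). Qed.

(* element with sign s and magnitude a (sign dropped if a = O) *)
Definition mkL (s : bool) (a : T) : symL := SymL (mkL_proof s a).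

Definition zeroL : symL := mkL false \bot.
Definition oppL (x : symL) : symL := mkL (~~ sgn x) (mag x).
Definition absL (x : symL) : T := mag x.

Definition leL (x y : symL) : bool :=
  if sgn x then (if sgn y then mag y <= mag x else true)
  else (if sgn y then false else mag x <= mag y).

Definition eqL (x y : symL) : bool := (sgn x == sgn y) && (mag x == mag y).

Definition oplusL (a b : symL) : symL :=
  if eqL b (oppL a) then zeroL
  else if mag a < mag b then b else a.

Definition joinL (x y : symL) : symL := if leL x y then y else x.
Definition meetL (x y : symL) : symL := if leL x y then x else y.

(* splitting rule for a finite family given as a list:
   (sup of the a_i >= O) (+) (inf of the a_i < O), empty sup/inf = O *)
Definition supNonneg (s : seq symL) : symL :=
  foldr joinL zeroL [seq a <- s | leL zeroL a].
Definition infNeg (s : seq symL) : symL :=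
  foldr meetL zeroL [seq a <- s | ~~ leL zeroL a].
Definition splitSum (s : seq symL) : symL := oplusL (supNonneg s) (infNeg s).

End SymExt.

Section Poset.
Context {d : Order.disp_t} (X : porderType d).

Definition locally_finite : Prop :=
  forall u v : X, exists s : seq X, forall z, (z \in s) = (u <= z <= v).

Definition covers (y x : X) : Prop :=
  y < x /\ forall z : X, ~ (y < z /\ z < x).

End Poset.

(* The splitting rule either cancels to O or returns an element of maximal
   absolute value among its arguments, and its absolute value never exceeds
   a common bound of the absolute values of its arguments.  If g x <> O, then
   |g x| bounds |f z| for every z <= x; for y < x the down-set of y lies in that
   of x, so |g y| <= |g x|. *)
From mathcomp Require Import all_boot all_order.
Import Order.TTheory.
Local Open Scope order_scope.

Section SplitSum.
Context {d : Order.disp_t} {T : tbOrderType d}.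
Implicit Types (a b : symL T) (s : seq (symL T)) (m : T).

Lemma le_bound_andl (b c m : T) : b <= c -> (c <= m) = (b <= m) && (c <= m).
Proof.
by move=> bc; apply/idP/andP => [cm|[]//]; split=> //; exact: le_trans bc cm.
Qed.

Lemma leL0 a : leL (zeroL T) a = ~~ sgn a.
Proof. by rewrite /leL /=; case: (sgn a); rewrite ?le0x. Qed.

Lemma sgn_supNonneg s : sgn (supNonneg s) = false.
Proof.
rewrite /supNonneg; elim: s => [|a s IH] //=.
case: ifP => [|_ //]; rewrite leL0 => /negbTE Ha.
by rewrite /= /joinL; case: ifP.
Qed.

Lemma mag_supNonneg_le s m :
  (mag (supNonneg s) <= m) = all (fun a => ~~ sgn a ==> (mag a <= m)) s.
Proof.
elim: s => [|a s IH]; first by rewrite /supNonneg le0x.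
rewrite /= -IH /supNonneg /=.
case: ifP => Ha; rewrite leL0 in Ha; last by rewrite (negbFE Ha).
move/negbTE: Ha => Ha.
have := sgn_supNonneg s; rewrite /supNonneg; set r := foldr _ _ _ => Hr.
rewrite /= /joinL /leL Ha Hr /=; case: (leP (mag a) (mag r)) => H.
  exact: le_bound_andl.
by rewrite andbC; apply: le_bound_andl; apply: ltW.
Qed.

Lemma sgn_or_mag0_infNeg s : sgn (infNeg s) || (mag (infNeg s) == \bot).
Proof.
rewrite /infNeg; elim: s => [|a s IH] //=.
case: ifP => [|_ //]; rewrite leL0 negbK => Ha.
by rewrite /= /meetL; case: ifP; rewrite ?Ha.
Qed.

Lemma mag_infNeg_le s m :
  (mag (infNeg s) <= m) = all (fun a => sgn a ==> (mag a <= m)) s.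
Proof.
elim: s => [|a s IH]; first by rewrite /infNeg le0x.
rewrite /= -IH /infNeg /=.
case: ifP => Ha; rewrite leL0 negbK in Ha; last by rewrite Ha.
have := sgn_or_mag0_infNeg s; rewrite /infNeg; set r := foldr _ _ _ => Hr.
rewrite /= /meetL /leL Ha; case: (boolP (sgn r)) Hr => [_ _|_ /eqP ->].
  case: (leP (mag r) (mag a)) => H /=.
    by rewrite andbC; apply: le_bound_andl.
  by apply: le_bound_andl; apply: ltW.
by rewrite le0x andbT.
Qed.

Lemma mag_oplus_le a b m :
  mag a <= m -> mag b <= m -> mag (oplusL a b) <= m.
Proof. by rewrite /oplusL; case: ifP => _ ? ?; [rewrite le0x | case: ifP]. Qed.

Lemma oplus0_or_ge a b :
  oplusL a b = zeroL T \/
  mag a <= mag (oplusL a b) /\ mag b <= mag (oplusL a b).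
Proof.
rewrite /oplusL; case: ifP => _; [by left | right].
by case: ltP => H; split => //; apply: ltW.
Qed.

Lemma mag_split_le s m :
  (mag (supNonneg s) <= m) && (mag (infNeg s) <= m) =
  all (fun a => mag a <= m) s.
Proof.
rewrite mag_supNonneg_le mag_infNeg_le -all_predI.
by apply: eq_all => a /=; case: (sgn a); rewrite /= ?andbT.
Qed.

Lemma mag_splitSum_le s m :
  all (fun a => mag a <= m) s -> mag (splitSum s) <= m.
Proof. by rewrite -mag_split_le => /andP[]; apply: mag_oplus_le. Qed.

Lemma splitSum0_or_max s :
  splitSum s = zeroL T \/ all (fun a => mag a <= mag (splitSum s)) s.
Proof.
rewrite /splitSum.
have [->|[Hsup Hinf]] := oplus0_or_ge (supNonneg s) (infNeg s); first by left.
by right; rewrite -mag_split_le Hsup Hinf.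
Qed.

End SplitSum.

Lemma down_set_seq {d : Order.disp_t} {X : porderType d} {x0 : X} :
  locally_finite X -> (forall x : X, x0 <= x) ->
  forall x : X, exists s : seq X, forall y, (y \in s) = (y <= x).
Proof.
by move=> hlf h0 x; have [s Hs] := hlf x0 x; exists s => y; rewrite Hs h0.
Qed.

Theorem proposition5
  (dL : Order.disp_t) (T : tbOrderType dL)
  (dX : Order.disp_t) (X : porderType dX) (x0 : X)
  (hlf : locally_finite X)
  (h0 : forall x : X, x0 <= x)
  (f g : X -> symL T)
  (hg : forall (x : X) (s : seq X),
          (forall y, (y \in s) = (y <= x)) ->
          g x = splitSum [seq f y | y <- s]) :
  forall x : X,
    (forall y : X, covers y x -> absL (g y) <= absL (g x))
    \/ g x = zeroL T.
Proof.
move=> x; have [sx Hsx] := down_set_seq hlf h0 x.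
have [H0|Hmax] := splitSum0_or_max [seq f z | z <- sx].
  by right; rewrite (hg x sx Hsx).
left => y [Hyx _]; have [sy Hsy] := down_set_seq hlf h0 y.
rewrite /absL (hg x sx Hsx) (hg y sy Hsy); apply: mag_splitSum_le.
move: Hmax; rewrite !all_map => /allP Hmax; apply/allP => z Hz; apply: Hmax.
by rewrite Hsx; apply: le_trans (ltW Hyx); rewrite -Hsy.
Qed.
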